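(* Let $C$ be a ternary linear $[n,k,d]$ code with $\dim(C\cap C^{\perp_E})=s$. For any $i\in\{1,\ldots,n\}$, if $C_i$ denotes the shortened code of $C$ on the $i$-th coordinate, then $\dim(C_i\cap C_i^{\perp_E})\le s+1$.
   Context: A ternary $[n,k,d]$ code is a $k$-dimensional subspace of $\mathbb{F}_3^n$ with minimum nonzero Hamming weight $d$. $C^{\perp_E}$ is the dual with respect to $\langle x,y\rangle_E=\sum x_iy_i$. The shortened code $C_i$ is obtained by taking the codewords of $C$ whose $i$-th coordinate is $0$ and deleting that coordinate. *)

From mathcomp Require Import all_boot all_algebra.
Set Implicit Arguments. Unset Strict Implicit. Unset Printing Implicit Defensive.
Import GRing.Theory.
Local Open Scope ring_scope.

(* A linear code of length n over a field F is represented (mxalgebra style)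
   as the row space of a matrix C : 'M[F]_(m, n); its dimension is \rank C. *)

Definition edual {F : fieldType} (m n : nat) (C : 'M[F]_(m, n)) : 'M[F]_n :=
  kermx C^T.

Definition zero_coord {F : fieldType} (n : nat) (i : 'I_n) : 'M[F]_n :=
  kermx (delta_mx i 0 : 'M[F]_(n, 1)).

Definition del_coord_mx {F : fieldType} (n : nat) (i : 'I_n.+1) : 'M[F]_(n.+1, n) :=
  \matrix_(k, j) (k == lift i j)%:R.

Definition shortened {F : fieldType} (m n : nat) (C : 'M[F]_(m, n.+1))
  (i : 'I_n.+1) : 'M[F]_(n.+1, n) :=
  ((C :&: zero_coord i)%MS *m del_coord_mx i).

From mathcomp Require Import all_boot all_algebra.
From mathcomp Require Import zify.
Set Implicit Arguments. Unset Strict Implicit. Unset Printing Implicit Defensive.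
Import GRing.Theory.
Local Open Scope ring_scope.

(* Shortening factors through the subcode D = C ∩ {x | x_i = 0}, which has
   codimension at most one in C.  Passing from C to a subcode D loses at most
   as much hull dimension as it loses dimension, because hull(D) ∩ C^⊥ lies in
   hull(C) while hull(D) + C^⊥ lies in D^⊥.  Deleting a coordinate on which
   every word of D vanishes cannot enlarge the hull: the deletion map has a
   right inverse on such words (reinsert a zero) that preserves inner
   products with D, so it maps hull(D) onto hull of the shortened code. *)

Section Hull.
Variable F : fieldType.

Definition hull m n (C : 'M[F]_(m, n)) : 'M[F]_n := (C :&: edual C)%MS.

Lemma sub_edual m n p (D : 'M[F]_(m, n)) (x : 'M[F]_(p, n)) :
  (x <= edual D)%MS = (x *m D^T == 0).
Proof. exact: sub_kermx. Qed.

Lemma mxrank_edual m n (D : 'M[F]_(m, n)) : \rank (edual D) = (n - \rank D)%N.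
Proof. by rewrite /edual mxrank_ker mxrank_tr. Qed.

Lemma edualS m1 m2 n (D : 'M[F]_(m1, n)) (C : 'M[F]_(m2, n)) :
  (D <= C)%MS -> (edual C <= edual D)%MS.
Proof.
move=> /submxP [y ->]; rewrite sub_edual trmx_mul mulmxA.
by have := submx_refl (edual C); rewrite sub_edual => /eqP ->; rewrite mul0mx.
Qed.

Lemma mxrank_hullS m1 m2 n (D : 'M[F]_(m1, n)) (C : 'M[F]_(m2, n)) :
  (D <= C)%MS -> (\rank (hull D) + \rank D <= \rank (hull C) + \rank C)%N.
Proof.
move=> sDC; have := mxrank_sum_cap (hull D) (edual C).
have capS : (hull D :&: edual C <= hull C)%MS.
  rewrite sub_capmx capmxSr andbT.
  exact: submx_trans (capmxSl _ _) (submx_trans (capmxSl _ _) sDC).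
have addS : (hull D + edual C <= edual D)%MS.
  by rewrite addsmx_sub capmxSr edualS.
move/mxrankS: capS; move/mxrankS: addS; rewrite !mxrank_edual.
have := rank_leq_col C; have := rank_leq_col D.
lia.
Qed.

Lemma mxrank_zero_coord n (i : 'I_n) : \rank (zero_coord (F:=F) i) = n.-1.
Proof. by rewrite /zero_coord mxrank_ker mxrank_delta subn1. Qed.

Lemma mxrank_cap_zero_coord m n (C : 'M[F]_(m, n)) (i : 'I_n) :
  (\rank C <= (\rank (C :&: zero_coord i)).+1)%N.
Proof.
have := mxrank_sum_cap C (zero_coord i); rewrite mxrank_zero_coord.
have := rank_leq_col (C + zero_coord i)%MS; have := ltn_ord i.
lia.
Qed.

Lemma del_coord_mx_mul_tr n (i : 'I_n.+1) :
  del_coord_mx (F:=F) i *m (del_coord_mx i)^T = 1%:M - delta_mx i i.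
Proof.
apply/matrixP => k l; rewrite !mxE.
under eq_bigr do rewrite /del_coord_mx !mxE.
case: (unliftP i k) => [j ->|->].
- rewrite (bigD1 j) //= big1 => [|j' /negbTE nj'j]; last first.
    by rewrite (inj_eq lift_inj) eq_sym nj'j mul0r.
  have liftNi : (lift i j == i) = false by rewrite eq_sym (negbTE (neq_lift _ _)).
  by rewrite eqxx mul1r addr0 liftNi subr0 eq_sym.
- rewrite big1 => [|j _]; last by rewrite (negbTE (neq_lift i j)) mul0r.
  by rewrite eqxx /= eq_sym subrr.
Qed.

Lemma del_coord_mxK m n (D : 'M[F]_(m, n.+1)) (i : 'I_n.+1) :
  (D <= zero_coord i)%MS -> D *m del_coord_mx i *m (del_coord_mx i)^T = D.
Proof.
rewrite sub_kermx => /eqP Di0.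
rewrite -mulmxA del_coord_mx_mul_tr mulmxBr mulmx1.
by rewrite -(mul_delta_mx (0 : 'I_1)) mulmxA Di0 mul0mx subr0.
Qed.

Lemma mxrank_hull_del_coord m n (D : 'M[F]_(m, n.+1)) (i : 'I_n.+1) :
  (D <= zero_coord i)%MS ->
  (\rank (hull (D *m del_coord_mx i)) <= \rank (hull D))%N.
Proof.
move=> /del_coord_mxK DK; set P := del_coord_mx i.
apply: leq_trans (mxrankM_maxl _ P); apply: mxrankS.
apply/rV_subP => w; rewrite sub_capmx => /andP [/submxP [y ->]].
rewrite sub_edual mulmxA => /eqP yDPDP0.
apply: submxMr; rewrite sub_capmx submxMl sub_edual /=.
by rewrite -{1}DK !mulmxA -(mulmxA _ P^T) -trmx_mul yDPDP0.
Qed.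

End Hull.

Theorem proposition5p3 (n m : nat) (C : 'M['F_3]_(m, n.+1)) (s : nat) :
  \rank (C :&: edual C)%MS = s ->
  forall i : 'I_n.+1,
    (\rank (shortened C i :&: edual (shortened C i))%MS <= s.+1)%N.
Proof.
move=> <- i; set D := (C :&: zero_coord i)%MS.
have hull_short : (\rank (hull (shortened C i)) <= \rank (hull D))%N.
  exact/mxrank_hull_del_coord/capmxSr.
have hullD := mxrank_hullS (capmxSl C (zero_coord i)).
have codim1 := mxrank_cap_zero_coord C i.
rewrite -/D in hullD codim1; rewrite /hull in hull_short hullD.
lia.
Qed.
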